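(* Let $G\subset \mathrm U(1,n+1)_{\mathbb Cp}$ be a Lie subgroup that is weakly irreducible, i.e. does not preserve any proper nonzero non-degenerate complex subspace of $\mathbb C^{1,n+1}$. Then $\Gamma(G)\subset\mathrm{Sim}\,\mathbb C^n$ does not preserve any proper complex affine subspace of $\mathbb C^n$. Consequently, if $\Gamma(G)$ preserves a proper real affine subspace $L\subset\mathbb C^n$, then the minimal complex affine subspace of $\mathbb C^n$ containing $L$ is $\mathbb C^n$.
   Context: $\mathbb C^{1,n+1}$ has a Witt basis $p,e_1,\dots,e_n,q$ (only nonzero values $h(p,q)=h(q,p)=1$, $h(e_j,e_j)=1$), $\mathbb C^n=\mathrm{span}_{\mathbb C}\{e_1,\dots,e_n\}$ with its Hermitian metric. $\mathrm U(1,n+1)_{\mathbb Cp}$ is the subgroup of $\mathrm U(1,n+1)$ preserving the line $\mathbb Cp$; it is generated by the matrices (in the basis $p,e_1,\dots,e_n,q$) $\begin{pmatrix} e^a&0&0\\0&A&0\\0&0&e^{-\bar a}\end{pmatrix}$ ($a\in\mathbb C$, $A\in\mathrm U(n)$) and $\begin{pmatrix} 1&-\bar Z^t& -\tfrac12\bar Z^tZ+ic\\0&E_n&Z\\0&0&1\end{pmatrix}$ ($Z\in\mathbb C^n$, $c\in\mathbb R$). $\mathrm{Sim}\,\mathbb C^n=(\mathbb R^*\cdot\mathrm U(n))\ltimes\mathbb C^n$ is the group of similarity transformations of $\mathbb C^n$, and $\Gamma:\mathrm U(1,n+1)_{\mathbb Cp}\to\mathrm{Sim}\,\mathbb C^n$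 is the homomorphism sending the first type of generator to the linear map $e^{\bar a}A$ and the second to the translation by $Z$ (geometrically, it is induced by the action on the boundary of complex hyperbolic space minus the point $\mathbb Cp$, i.e. on the Heisenberg space $\mathbb C^n\oplus\mathbb R$, followed by projection to $\mathbb C^n$). *)

From HB Require Import structures.
From mathcomp Require Import all_boot all_order all_algebra.
Set Implicit Arguments. Unset Strict Implicit. Unset Printing Implicit Defensive.
Import Order.TTheory GRing.Theory Num.Theory.
Local Open Scope ring_scope.

(* The complex field is modelled by an arbitrary numClosedFieldType C
   (algebraically closed field with complex conjugation z^*, real elements
   = Num.real).  C^{1,n+1} = column vectors indexed by 'I_(n.+2) in the Witt
   basis p (index 0), e_1..e_n (indices 1..n), q (index n+1). *)

Section Defs.
Variable C : numClosedFieldType.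
Variable n : nat.

Definition idx_p : 'I_(n.+2) := ord0.
Definition idx_q : 'I_(n.+2) := ord_max.
Definition idx_e (j : 'I_n) : 'I_(n.+2) := lift ord0 (widen_ord (leqnSn n) j).

Definition Hmat : 'M[C]_(n.+2) :=
  \matrix_(i, j)
    (if ((i == idx_p) && (j == idx_q)) || ((i == idx_q) && (j == idx_p))
        || ((i == j) && (i != idx_p) && (i != idx_q))
     then 1 else 0).

Definition herm (u v : 'rV[C]_(n.+2)) : C :=
  (map_mx Num.conj u *m Hmat *m v^T) 0 0.

Definition unitary (M : 'M[C]_(n.+2)) : Prop :=
  (map_mx Num.conj M)^T *m Hmat *m M = Hmat.

Definition pvec : 'cV[C]_(n.+2) := delta_mx idx_p 0.

Definition U_Cp (M : 'M[C]_(n.+2)) : Prop :=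
  unitary M /\ exists l : C, M *m pvec = l *: pvec.

Definition subgroup_U_Cp (G : 'M[C]_(n.+2) -> Prop) : Prop :=
  [/\ forall g, G g -> U_Cp g,
      G 1%:M,
      forall g k, G g -> G k -> G (g *m k)
    & forall g, G g -> G (invmx g)].

(* Complex subspaces of C^{1,n+1}: row spaces of square matrices W
   (rows = coordinate vectors).  g preserves W iff g(W) <= W. *)
Definition preserves_subspace (g W : 'M[C]_(n.+2)) : Prop :=
  (W *m g^T <= W)%MS.

Definition nondegenerate (W : 'M[C]_(n.+2)) : Prop :=
  forall v : 'rV[C]_(n.+2), (v <= W)%MS ->
    (forall w : 'rV[C]_(n.+2), (w <= W)%MS -> herm v w = 0) -> v = 0.

Definition weakly_irreducible (G : 'M[C]_(n.+2) -> Prop) : Prop :=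
  forall W : 'M[C]_(n.+2),
    (forall g, G g -> preserves_subspace g W) -> nondegenerate W ->
    \rank W = 0%N \/ \rank W = n.+2.

(* Every g in U(1,n+1)_{Cp} is block upper
   triangular [[*,*,*],[0,B,v],[0,0,mu]]; writing g = T(Z,c) D(e^a,A) one finds
   B = A, mu = e^{-conj a}, v = Z e^{-conj a}, so Gamma(g) : x |-> e^{conj a} A x + Z
   is x |-> mu^{-1} (B x + v).  Points of C^n are row vectors. *)
Definition Gamma (g : 'M[C]_(n.+2)) (x : 'rV[C]_n) : 'rV[C]_n :=
  (g idx_q idx_q)^-1 *:
    \row_(j < n) (\sum_(k < n) g (idx_e j) (idx_e k) * x 0 k + g (idx_e j) idx_q).

Definition in_caff (a : 'rV[C]_n) (V : 'M[C]_n) (x : 'rV[C]_n) : Prop :=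
  (x - a <= V)%MS.

Definition real_affine (L : 'rV[C]_n -> Prop) : Prop :=
  (exists x, L x) /\
  forall x y t, L x -> L y -> t \is Num.real -> L ((1 - t) *: x + t *: y).

End Defs.

From Pilot Require Import Defs.
From HB Require Import structures.
From mathcomp Require Import all_boot all_order all_algebra all_fingroup.
From mathcomp Require Import zify ring.
Set Implicit Arguments. Unset Strict Implicit. Unset Printing Implicit Defensive.
Import Order.TTheory GRing.Theory Num.Theory.
Local Open Scope ring_scope.

(* If Gamma(G) preserves a + V, then G preserves the complex cone
   W = Cp + C(q + (a + V)) of C^{1,n+1}: in the chart v |-> v_e - v_q a, an
   element g, being block triangular, acts on W through the affine map
   Gamma(g).  W is non-degenerate: a vector orthogonal to p has no q-component,
   orthogonality to the e-part of W kills its e-component (h is definite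
   there), and orthogonality to q + a kills its p-component.  As p lies in W,
   weak irreducibility forces W to be everything, i.e. V = C^n.  For a real
   affine L containing x0, the smallest complex subspace containing L - x0 is
   stable under the linear parts of Gamma(G), so its translate by x0 is a
   Gamma(G)-invariant complex affine subspace, hence all of C^n. *)

Section AffineSubspaces.
Variables (F : fieldType) (n : nat).

Lemma submxB m (A B : 'M[F]_(m, n)) (V : 'M_n) :
  (A <= V)%MS -> (B <= V)%MS -> (A - B <= V)%MS.
Proof. by move=> sAV sBV; rewrite addmx_sub // -scaleN1r scalemx_sub. Qed.

Lemma submxBB m (A B D : 'M[F]_(m, n)) (V : 'M_n) :
  (A - D <= V)%MS -> (B - D <= V)%MS -> (A - B <= V)%MS.
Proof.
have -> : A - B = (A - D) - (B - D) by rewrite opprB addrA subrK.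
exact: submxB.
Qed.

Lemma affine_map_stableE (T : 'M[F]_n) (b a : 'rV_n) (V : 'M_n) :
  (forall x, (x - a <= V)%MS -> (x *m T + b - a <= V)%MS) <->
  (a *m T + b - a <= V)%MS /\ stablemx V T.
Proof.
have shift x : x *m T + b - a = (a *m T + b - a) + (x - a) *m T.
  by rewrite mulmxBl [RHS]addrC !addrA subrK.
split=> [stV | [sfaV sVT] x sxV].
  have sfaV : (a *m T + b - a <= V)%MS by apply: stV; rewrite subrr sub0mx.
  split=> //; apply/row_subP => i; rewrite row_mul.
  have := stV (a + row i V); rewrite addrAC subrr add0r row_sub shift => /(_ isT).
  by move/submxB/(_ sfaV); rewrite [_ + _ *m T]addrC addrK addrAC subrr add0r.
by rewrite shift addmx_sub // (submx_trans _ sVT) // submxMr.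
Qed.

(* A subspace U containing D but not T-stable can be cut down to the smaller
   U :&: T^-1(U), which still contains D. *)
Lemma row_full_of_stable (D : 'rV[F]_n -> Prop) (Ts : 'M[F]_n -> Prop) :
  (forall T, Ts T -> forall U : 'M_n, (forall y, D y -> (y <= U)%MS) ->
     forall y, D y -> (y *m T <= U)%MS) ->
  (forall U : 'M_n, (forall y, D y -> (y <= U)%MS) ->
     (forall T, Ts T -> stablemx U T) -> row_full U) ->
  forall U : 'M_n, (forall y, D y -> (y <= U)%MS) -> row_full U.
Proof.
move=> DTsub fullS U; move: {2}(\rank U) (erefl (\rank U)) => r.
elim/ltn_ind: r U => r IH U rU sDU.
apply: fullS => // T TsT; apply: contraT => notST.
pose U' := (U :&: kermx (T *m cokermx U))%MS.
have sDU' : forall y, D y -> (y <= U')%MS.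
  by move=> y Dy; rewrite sub_capmx sDU // sub_kermx mulmxA -submxE DTsub.
have ltU'U : (\rank U' < r)%N.
  rewrite -rU ltn_neqAle mxrankS ?capmxSl // andbT.
  rewrite (mxrank_leqif_eq (capmxSl _ _)).2 sub_capmx submx_refl /=.
  by apply: contra notST => /andP[_]; rewrite sub_kermx mulmxA -submxE.
have /eqP := IH _ ltU'U U' erefl sDU'.
by have := rank_leq_col U; rewrite -rU in ltU'U; lia.
Qed.

End AffineSubspaces.

Lemma sum_mul_eq_natr (R : pzSemiRingType) (I : finType) (F : I -> R) k :
  \sum_i F i * (i == k)%:R = F k.
Proof.
rewrite (bigD1 k) //= eqxx mulr1 big1 ?addr0 // => i /negbTE ->.
by rewrite mulr0.
Qed.

Section WittBasis.
Variables (C : numClosedFieldType) (n : nat).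

Local Notation p := (idx_p n).
Local Notation q := (idx_q n).
Local Notation e := (@idx_e n).

Lemma idx_pq_neq : p != q.
Proof. by apply/eqP => /(congr1 val). Qed.

Lemma idx_ep_neq j : e j != p.
Proof. by apply/eqP => /(congr1 val). Qed.

Lemma idx_eq_neq j : e j != q.
Proof. by apply/eqP => /(congr1 val) /=; rewrite /bump /=; have := ltn_ord j; lia. Qed.

Lemma idx_e_inj : injective e.
Proof. by move=> j k /(congr1 val) [] /val_inj. Qed.

Lemma idx_witt_cases i : i = p \/ (exists j, i = e j) \/ i = q.
Proof.
case: i => [[|k] lt_k]; first by left; apply: val_inj.
have [lt_kn|] := ltnP k n; last by right; right; apply: val_inj => /=; lia.
by right; left; exists (Ordinal lt_kn); apply: val_inj.
Qed.

Lemma sum_idx_witt (f : 'I_(n.+2) -> C) :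
  \sum_i f i = f p + \sum_j f (e j) + f q.
Proof.
rewrite big_ord_recl big_ord_recr /= addrA.
by congr (_ + _ + f _); apply: val_inj.
Qed.

Definition witt (cp : C) (x : 'rV[C]_n) (cq : C) : 'rV[C]_(n.+2) :=
  \row_i ((i == p)%:R * cp + \sum_(j | i == e j) x 0 j + (i == q)%:R * cq).

Lemma witt_p cp x cq : witt cp x cq 0 p = cp.
Proof.
rewrite mxE eqxx (negbTE idx_pq_neq) big_pred0 => [|j].
  by rewrite /= mul1r mul0r !addr0.
by rewrite eq_sym (negbTE (idx_ep_neq j)).
Qed.

Lemma witt_q cp x cq : witt cp x cq 0 q = cq.
Proof.
rewrite mxE eqxx [q == p]eq_sym (negbTE idx_pq_neq) big_pred0 => [|j].
  by rewrite /= mul1r mul0r !add0r.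
by rewrite eq_sym (negbTE (idx_eq_neq j)).
Qed.

Lemma witt_e cp x cq j : witt cp x cq 0 (e j) = x 0 j.
Proof.
rewrite mxE (negbTE (idx_ep_neq j)) (negbTE (idx_eq_neq j)).
rewrite (eq_bigl (pred1 j)) ?big_pred1_eq => [|k].
  by rewrite !mul0r add0r addr0.
by rewrite /= (inj_eq idx_e_inj) eq_sym.
Qed.

Lemma wittE (v : 'rV[C]_(n.+2)) : v = witt (v 0 p) (\row_j v 0 (e j)) (v 0 q).
Proof.
apply/rowP => i; have [->|[[j ->]|->]] := idx_witt_cases i.
- by rewrite witt_p.
- by rewrite witt_e mxE.
- by rewrite witt_q.
Qed.

Lemma Hmat_perm : Hmat C n = perm_mx (tperm p q).
Proof.
apply/matrixP => i j; rewrite !mxE.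
case: tpermP => [->|->|/eqP/negbTE ip /eqP/negbTE iq].
- by rewrite eqxx (negbTE idx_pq_neq) /= !andbF orbF eq_sym; case: (_ == _).
- by rewrite eqxx eq_sym (negbTE idx_pq_neq) /= !andbF orbF eq_sym; case: (_ == _).
- by rewrite ip iq /= !andbT; case: (_ == _).
Qed.

Lemma hermE (u v : 'rV[C]_(n.+2)) :
  herm u v = \sum_k (u 0 k)^* * v 0 (tperm p q k).
Proof.
rewrite /herm Hmat_perm -mulmxA -row_permE mxE; apply: eq_bigr => k _.
by rewrite !mxE.
Qed.

Lemma herm_witt cp x cq dp y dq :
  herm (witt cp x cq) (witt dp y dq) =
  cp^* * dq + \sum_j (x 0 j)^* * y 0 j + cq^* * dp.
Proof.
rewrite hermE sum_idx_witt tpermL tpermR !witt_p !witt_q; congr (_ + _ + _).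
apply: eq_bigr => j _.
by rewrite tpermD ?witt_e // eq_sym ?idx_ep_neq ?idx_eq_neq.
Qed.

Lemma U_Cp_block (g : 'M[C]_(n.+2)) : U_Cp g ->
  [/\ forall i, i != p -> g i p = 0, forall j, g q (e j) = 0 & g q q != 0].
Proof.
case=> unit_g [l g_p].
have col_p i : g i p = l * (i == p)%:R.
  have := congr1 (fun M : 'cV_(n.+2) => M i 0) g_p.
  by rewrite /pvec -colE !mxE eqxx andbT.
have row_q k : l^* * g q k = (q == k)%:R.
  have := congr1 (fun M : 'M_(n.+2) => M p k) unit_g.
  rewrite Hmat_perm -mulmxA -row_permE !mxE tpermL (bigD1 p) //= big1 => [|i ip].
    by rewrite !mxE col_p eqxx mulr1 tpermL addr0.
  by rewrite !mxE col_p (negbTE ip) mulr0 conjC0 mul0r.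
have : l^* * g q q != 0 by rewrite row_q eqxx oner_neq0.
rewrite mulf_eq0 negb_or => /andP[l_neq0 ->].
split=> [i ip|j|//]; first by rewrite col_p (negbTE ip) mulr0.
have /eqP := row_q (e j); rewrite [q == _]eq_sym (negbTE (idx_eq_neq j)).
by rewrite mulf_eq0 (negbTE l_neq0) => /eqP.
Qed.

Definition Gamma_linear (g : 'M[C]_(n.+2)) : 'M[C]_n :=
  (g q q)^-1 *: \matrix_(k, j) g (e j) (e k).

Lemma GammaE g x : Gamma g x = x *m Gamma_linear g + Gamma g 0.
Proof.
apply/rowP => j; rewrite !mxE.
have -> : \sum_k g (e j) (e k) * (0 : 'rV[C]_n) 0 k = 0.
  by rewrite big1 // => k _; rewrite mxE mulr0.
rewrite add0r !mulrDr; congr (_ + _); rewrite mulr_sumr; apply: eq_bigr => k _.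
by rewrite !mxE; ring.
Qed.

Lemma GammaB g x y : Gamma g x - Gamma g y = (x - y) *m Gamma_linear g.
Proof. by rewrite (GammaE g x) (GammaE g y) mulmxBl opprD addrACA subrr addr0. Qed.

Lemma Gamma_stable_caffE g a V :
  (forall x, in_caff a V x -> in_caff a V (Gamma g x)) <->
  (Gamma g a - a <= V)%MS /\ stablemx V (Gamma_linear g).
Proof.
rewrite (GammaE g a) -affine_map_stableE /in_caff.
by split=> stV x; [rewrite -GammaE | rewrite (GammaE g x)]; apply: stV.
Qed.

Definition chart_mx (a : 'rV[C]_n) : 'M[C]_(n.+2, n) :=
  \matrix_(i, j) ((i == e j)%:R - (i == q)%:R * a 0 j).

Lemma mul_chart_mx v a :
  v *m chart_mx a = \row_j (v 0 (e j) - v 0 q * a 0 j).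
Proof.
apply/rowP => j; rewrite !mxE.
under eq_bigr do rewrite mxE mulrBr mulrA.
by rewrite sumrB -mulr_suml !sum_mul_eq_natr.
Qed.

Lemma mul_witt_chart_mx cp x cq a : witt cp x cq *m chart_mx a = x - cq *: a.
Proof. by apply/rowP => j; rewrite mul_chart_mx [LHS]mxE witt_e witt_q !mxE. Qed.

Lemma chart_mx_mulmx_tr (g : 'M[C]_(n.+2)) cp x cq a :
    (forall i, i != p -> g i p = 0) -> (forall j, g q (e j) = 0) -> g q q != 0 ->
  (witt cp x cq *m g^T) *m chart_mx a =
    g q q *: ((x - cq *: a) *m Gamma_linear g + cq *: (Gamma g a - a)).
Proof.
move=> g_p gq_e gqq_neq0; rewrite mul_chart_mx; apply/rowP => j.
have coord i : (witt cp x cq *m g^T) 0 i =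
    cp * g i p + \sum_k x 0 k * g i (e k) + cq * g i q.
  rewrite mxE sum_idx_witt witt_p witt_q !mxE; congr (_ + _ + _).
  by apply: eq_bigr => k _; rewrite witt_e mxE.
rewrite [LHS]mxE !coord !g_p ?idx_ep_neq 1?eq_sym ?idx_pq_neq //.
have -> : \sum_k x 0 k * g q (e k) = 0.
  by rewrite big1 // => k _; rewrite gq_e mulr0.
rewrite !mxE.
have -> : \sum_k (x - cq *: a) 0 k * Gamma_linear g k j = (g q q)^-1 *
    (\sum_k x 0 k * g (e j) (e k) - cq * \sum_k g (e j) (e k) * a 0 k).
  by rewrite mulrBr !mulr_sumr -sumrB; apply: eq_bigr => k _; rewrite !mxE; ring.
by field.
Qed.

(* The vectors witt cp x cq with x - cq a in V, i.e. Cp + C(q + (a + V)). *)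
Definition affine_cone (a : 'rV[C]_n) (V : 'M[C]_n) : 'M[C]_(n.+2) :=
  kermx (chart_mx a *m cokermx V).

Lemma sub_affine_cone (v : 'rV[C]_(n.+2)) a V :
  (v <= affine_cone a V)%MS = (v *m chart_mx a <= V)%MS.
Proof. by rewrite sub_kermx mulmxA -submxE. Qed.

Lemma witt_sub_affine_cone cp x cq a V :
  (witt cp x cq <= affine_cone a V)%MS = (x - cq *: a <= V)%MS.
Proof. by rewrite sub_affine_cone mul_witt_chart_mx. Qed.

Lemma affine_cone_stable g a V : U_Cp g ->
    (forall x, in_caff a V x -> in_caff a V (Gamma g x)) ->
  preserves_subspace g (affine_cone a V).
Proof.
case/U_Cp_block => g_p gq_e gqq_neq0 stV.
have [sGaV sVT] := (Gamma_stable_caffE g a V).1 stV.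
apply/row_subP => i; rewrite row_mul.
have := row_sub i (affine_cone a V); rewrite (wittE (row i _)).
rewrite witt_sub_affine_cone sub_affine_cone chart_mx_mulmx_tr // => sxV.
by rewrite scalemx_sub // addmx_sub ?scalemx_sub // (submx_trans _ sVT) // submxMr.
Qed.

Lemma affine_cone_nondegenerate a V : Defs.nondegenerate (affine_cone a V).
Proof.
move=> v sv orth.
have orth_witt cp y cq : (y - cq *: a <= V)%MS ->
    (v 0 p)^* * cq + \sum_j (v 0 (e j))^* * y 0 j + (v 0 q)^* * cp = 0.
  move=> syV; have := orth (witt cp y cq); rewrite witt_sub_affine_cone => /(_ syV).
  by rewrite {1}(wittE v) herm_witt; under eq_bigr do rewrite mxE.
have vq0 : v 0 q = 0.
  have := orth_witt 1 0 0; rewrite scale0r subr0 sub0mx => /(_ isT).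
  rewrite big1 => [|j _]; last by rewrite mxE mulr0.
  by rewrite mulr0 mulr1 !add0r => /eqP; rewrite conjC_eq0 => /eqP.
have ve0 j : v 0 (e j) = 0.
  have := sv; rewrite {1}(wittE v) witt_sub_affine_cone vq0 => /(orth_witt 0).
  rewrite mulr0 add0r mulr0 addr0 => sum0.
  apply/eqP; rewrite -mul_conjC_eq0 mulrC; apply/eqP.
  move: j isT; apply: psumr_eq0P => [j _|]; first by rewrite mulrC mul_conjC_ge0.
  by rewrite -[RHS]sum0; apply: eq_bigr => j _; rewrite mxE.
have vp0 : v 0 p = 0.
  have := orth_witt 0 a 1; rewrite scale1r subrr sub0mx => /(_ isT).
  rewrite vq0 big1 => [|j _]; last by rewrite ve0 conjC0 mul0r.
  by rewrite mulr1 conjC0 mul0r !addr0 => /eqP; rewrite conjC_eq0 => /eqP.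
by apply/rowP => i; rewrite mxE; have [->|[[j ->]|->]] := idx_witt_cases i.
Qed.

Lemma affine_cone_rank_neq0 a V : \rank (affine_cone a V) != 0%N.
Proof.
have pW : (witt 1 0 0 <= affine_cone a V)%MS.
  by rewrite witt_sub_affine_cone scale0r subr0 sub0mx.
rewrite -lt0n (leq_trans _ (mxrankS pW)) // lt0n mxrank_eq0.
apply/eqP => /(congr1 (fun w : 'rV_(n.+2) => w 0 p)).
by rewrite witt_p mxE; apply/eqP/oner_neq0.
Qed.

Lemma row_full_of_affine_cone a V : row_full (affine_cone a V) -> row_full V.
Proof.
move=> fullW; rewrite -sub1mx; apply/row_subP => i.
have := submx_full (witt 0 (row i 1%:M) 0) fullW.
by rewrite witt_sub_affine_cone scale0r subr0.
Qed.

End WittBasis.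

Theorem mainTheorem3 (C : numClosedFieldType) (n : nat)
    (G : 'M[C]_(n.+2) -> Prop) :
  subgroup_U_Cp G -> weakly_irreducible G ->
  (forall (a : 'rV[C]_n) (V : 'M[C]_n),
     (forall g, G g -> forall x, in_caff a V x -> in_caff a V (Gamma g x)) ->
     row_full V)
  /\
  (forall L : 'rV[C]_n -> Prop,
     real_affine L -> (exists x, ~ L x) ->
     (forall g, G g -> forall x, L x -> L (Gamma g x)) ->
     forall (a : 'rV[C]_n) (V : 'M[C]_n),
       (forall x, L x -> in_caff a V x) -> row_full V).
Proof.
move=> [G_U _ _ _] irrG.
have stable_caff_full a V :
    (forall g, G g -> forall x, in_caff a V x -> in_caff a V (Gamma g x)) ->
    row_full V.
  move=> stV; apply: (row_full_of_affine_cone (a := a)).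
  have stW g : G g -> preserves_subspace g (affine_cone a V).
    by move=> Gg; apply: affine_cone_stable (G_U g Gg) (stV g Gg).
  case: (irrG _ stW (affine_cone_nondegenerate (a := a) (V := V))) => [rk0|rkW].
    by have := affine_cone_rank_neq0 a V; rewrite rk0.
  by rewrite /row_full rkW.
split=> // L [[x0 Lx0] _] _ stL a V sLV.
apply: (row_full_of_stable (D := fun y => L (y + x0))
  (Ts := fun T => exists2 g, G g & T = Gamma_linear g)).
- move=> _ [g Gg ->] U sDU y Dy; rewrite -[y](addrK x0) -GammaB.
  by apply: (submxBB (D := x0)); apply: sDU; rewrite subrK; apply: stL.
- move=> U sDU stU; apply: (stable_caff_full x0) => g Gg.
  apply/Gamma_stable_caffE; split; last by apply: stU; exists g.
  by apply: sDU; rewrite subrK; exact: stL Gg x0 Lx0.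
- by move=> y Dy; rewrite -[y](addrK x0); apply: submxBB; apply: sLV.
Qed.
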